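(* Let $\mathcal U_n$ be the group of unitary operators on $\mathbb C^n$ and $\mathcal D_n=\{e^{ic}I: c\in\mathbb R\}$ its subgroup of scalar unitaries. Then $D(U,V)$ depends only on the cosets $U\mathcal D_n$ and $V\mathcal D_n$, and the induced function $D:(\mathcal U_n/\mathcal D_n)\times(\mathcal U_n/\mathcal D_n)\to\mathbb R$ is a metric on the quotient group $\mathcal U_n/\mathcal D_n$.
   Context: For unitary operators $U,V$ on $\mathbb C^n$ (standard inner product) define the u-distance $D(U,V)=\max_{\|\psi\|=1}\big(1-|\langle\psi,U^\dagger V\psi\rangle|^2\big)^{1/2}=\big(1-\min_{\|\psi\|=1}|\langle\psi,U^\dagger V\psi\rangle|^2\big)^{1/2}$. *)

From HB Require Import structures.
From mathcomp Require Import all_boot all_order all_algebra.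
From mathcomp Require Import complex.
From mathcomp Require Import all_classical all_reals.
From mathcomp Require Import trigo.
Set Implicit Arguments. Unset Strict Implicit. Unset Printing Implicit Defensive.
Import Order.TTheory GRing.Theory Num.Theory.
Local Open Scope ring_scope.
Local Open Scope classical_set_scope.

Section UDist.
Variable R : realType.
Variable n : nat.

Definition adjmx (m p : nat) (A : 'M[R[i]]_(m, p)) : 'M[R[i]]_(p, m) :=
  (map_mx (@conjc R) A)^T.

Definition cinner (psi phi : 'cV[R[i]]_n) : R[i] :=
  (adjmx psi *m phi) 0 0.

Definition cnorm (psi : 'cV[R[i]]_n) : R :=
  Num.sqrt (\sum_(k < n) ComplexField.Normc.normc (psi k 0) ^+ 2).

Definition unitary (U : 'M[R[i]]_n) : Prop :=
  adjmx U *m U = 1%:M /\ U *m adjmx U = 1%:M.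

Definition expi (c : R) : R[i] := (cos c +i* sin c)%C.

(* u-distance: D(U,V) = max_{||psi||=1} (1 - |<psi, U^dag V psi>|^2)^{1/2},
   the maximum being written as a supremum (it is attained by compactness). *)
Definition udist (U V : 'M[R[i]]_n) : R :=
  sup [set Num.sqrt (1 - ComplexField.Normc.normc (cinner psi ((adjmx U *m V) *m psi)) ^+ 2)
      | psi in [set psi : 'cV[R[i]]_n | cnorm psi = 1]].

End UDist.

(** For unit vectors the quantity [sqrt (1 - |<x, y>|^2)] is the sine of the
    Fubini-Study angle between the lines [C x] and [C y], so it satisfies the
    triangle inequality: writing [x = a y + x'] and [z = b y + z'] with
    [x', z'] orthogonal to [y], Cauchy-Schwarz on [<x', z'> = <x, z> - a^* b]
    gives [|a| |b| <= |<x, z>| + sqrt (1 - |a|^2) sqrt (1 - |b|^2)], which is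
    the addition formula [cos (alpha + beta) <= |<x, z>|] in disguise.  Since
    [D(U, V)] is the supremum of this sine between [psi] and [U^* V psi] and
    multiplying by unitaries preserves inner products, symmetry, the triangle
    inequality and invariance under phases follow pointwise.  Finally
    [D(U, V) = 0] says every unit vector is an eigenvector of [U^* V], which
    forces [U^* V] to be a unimodular scalar. *)
From HB Require Import structures.
From mathcomp Require Import all_boot all_order all_algebra.
From mathcomp Require Import complex.
From mathcomp Require Import all_classical all_reals.
From mathcomp Require Import trigo.
From mathcomp Require Import ring lra.
Set Implicit Arguments. Unset Strict Implicit. Unset Printing Implicit Defensive.
Import Order.TTheory GRing.Theory Num.Theory.

Local Open Scope complex_scope.
Local Open Scope ring_scope.

Local Notation normc := ComplexField.Normc.normc.

(* With (a, s) = (cos alpha, sin alpha) and (b, t) = (cos beta, sin beta),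
   the hypothesis reads cos (alpha + beta) <= c. *)
Lemma sin_add_sqr_ge (R : realFieldType) (a b c s t : R) : 0 <= a <= 1 -> 0 <= b <= 1 -> 0 <= c ->
  0 <= s -> 0 <= t -> s ^+ 2 = 1 - a ^+ 2 -> t ^+ 2 = 1 - b ^+ 2 ->
  a * b - s * t <= c -> 1 - c ^+ 2 <= (s + t) ^+ 2.
Proof.
move=> /andP[a0 a1] /andP[b0 b1] c0 s0 t0 hs ht hc.
have st0 : 0 <= s * t by rewrite mulr_ge0.
have [ab_le_st|st_lt_ab] := lerP (a * b) (s * t).
  have : (a * b) ^+ 2 <= (s * t) ^+ 2 by rewrite ler_pXn2r ?nnegrE ?mulr_ge0.
  rewrite !exprMn hs ht.
  by move: hs ht; rewrite !expr2 => hs ht; nra.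
have hc2 : (a * b - s * t) ^+ 2 <= c ^+ 2.
  by rewrite ler_pXn2r ?nnegrE // subr_ge0 ltW.
have : (s * b + t * a) ^+ 2 <= (s + t) ^+ 2.
  have sbta : s * b + t * a <= s + t by apply: lerD; apply: ler_piMr.
  by rewrite ler_pXn2r ?nnegrE ?addr_ge0 ?mulr_ge0.
have : (a * b - s * t) ^+ 2 + (s * b + t * a) ^+ 2 =
       (a ^+ 2 + s ^+ 2) * (b ^+ 2 + t ^+ 2) by ring.
rewrite hs ht !subrKC mulr1.
lra.
Qed.

Lemma sqrt1B_sqr_triangle (R : rcfType) (a b c : R) :
  0 <= a <= 1 -> 0 <= b <= 1 -> 0 <= c ->
  a * b <= c + Num.sqrt (1 - a ^+ 2) * Num.sqrt (1 - b ^+ 2) ->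
  Num.sqrt (1 - c ^+ 2) <= Num.sqrt (1 - a ^+ 2) + Num.sqrt (1 - b ^+ 2).
Proof.
move=> ha hb c0 hab.
have sqr_sqrt1B (x : R) : 0 <= x <= 1 -> Num.sqrt (1 - x ^+ 2) ^+ 2 = 1 - x ^+ 2.
  by case/andP=> x0 x1; rewrite sqr_sqrtr // subr_ge0 expr_le1.
rewrite -[leRHS]ger0_norm ?addr_ge0 ?sqrtr_ge0 // -sqrtr_sqr ler_sqrt ?sqr_ge0 //.
apply: sin_add_sqr_ge ha hb c0 _ _ (sqr_sqrt1B _ ha) (sqr_sqrt1B _ hb) _;
  rewrite ?sqrtr_ge0 //.
by rewrite lerBlDr.
Qed.

Section ComplexNorm.
Variable R : rcfType.
Implicit Types z : R[i].

Lemma normcE z : `|z| = (normc z)%:C.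
Proof. by []. Qed.

Lemma normc_ge0 z : 0 <= normc z.
Proof. by case: z => a b; rewrite sqrtr_ge0. Qed.

Lemma normc_conj z : normc z^* = normc z.
Proof. by apply: complexI; rewrite -!normcE normcJ. Qed.

Lemma sqr_normcE z : `|z| ^+ 2 = (normc z ^+ 2)%:C.
Proof. by rewrite normcE rmorphXn. Qed.

Lemma mul_conjc_normc z : z^* * z = (normc z ^+ 2)%:C.
Proof. by rewrite mulrC -sqr_normc sqr_normcE. Qed.

End ComplexNorm.

Lemma normc_expi (R : realType) (c : R) : normc (expi c) = 1.
Proof. by rewrite /expi /= cos2Dsin2 sqrtr1. Qed.

Lemma normc_eq1_expi (R : realType) (z : R[i]) :
  normc z = 1 -> exists c : R, z = expi c.
Proof.
case: z => a b /= h.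
have hab : a ^+ 2 + b ^+ 2 = 1.
  by rewrite -(sqr_sqrtr (addr_ge0 (sqr_ge0 a) (sqr_ge0 b))) h expr1n.
have ha : -1 <= a <= 1 by move: hab; rewrite !expr2 => hab; apply/andP; split; nra.
have sin_acos_a : sin (acos a) = `|b| by rewrite sin_acos // -hab addrC addKr sqrtr_sqr.
have [_ cos_acos_a] := acos_def ha.
have [b0|b0] := lerP 0 b.
  by exists (acos a); rewrite /expi cos_acos_a sin_acos_a ger0_norm.
by exists (- acos a); rewrite /expi cosN sinN cos_acos_a sin_acos_a ltr0_norm // opprK.
Qed.

Section Adjoint.
Variable R : realType.

Lemma adjmxE m p (A : 'M[R[i]]_(m, p)) i j : adjmx A i j = (A j i)^*.
Proof. by rewrite /adjmx !mxE. Qed.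

Lemma adjmxK m p (A : 'M[R[i]]_(m, p)) : adjmx (adjmx A) = A.
Proof. by apply/matrixP => i j; rewrite !adjmxE conjCK. Qed.

Lemma adjmxM m p q (A : 'M[R[i]]_(m, p)) (B : 'M[R[i]]_(p, q)) :
  adjmx (A *m B) = adjmx B *m adjmx A.
Proof. by rewrite /adjmx map_mxM trmx_mul. Qed.

Lemma adjmx_scalar m (a : R[i]) : adjmx (a%:M : 'M[R[i]]_m) = (a^*)%:M.
Proof.
apply/matrixP => i j; rewrite adjmxE !mxE eq_sym.
by case: (i == j); rewrite ?mulr1n ?mulr0n ?conjC0.
Qed.

End Adjoint.

Section InnerProduct.
Variables (R : realType) (n : nat).
Implicit Types (x y z : 'cV[R[i]]_n) (M : 'M[R[i]]_n).

Lemma cinnerE x y : cinner x y = \sum_k (x k 0)^* * y k 0.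
Proof. by rewrite /cinner !mxE; apply: eq_bigr => k _; rewrite adjmxE. Qed.

Lemma cinnerC x y : cinner y x = (cinner x y)^*.
Proof.
rewrite !cinnerE rmorph_sum; apply: eq_bigr => k _.
by rewrite rmorphM /= conjCK mulrC.
Qed.

Lemma cinner0l y : cinner 0 y = 0.
Proof. by rewrite cinnerE big1 // => k _; rewrite mxE conjC0 mul0r. Qed.

Lemma cinnerDr x y z : cinner x (y + z) = cinner x y + cinner x z.
Proof. by rewrite !cinnerE -big_split; apply: eq_bigr => k _; rewrite mxE mulrDr. Qed.

Lemma cinnerZr x y a : cinner x (a *: y) = a * cinner x y.
Proof. by rewrite !cinnerE mulr_sumr; apply: eq_bigr => k _; rewrite mxE mulrCA. Qed.

Lemma cinnerBr x y z : cinner x (y - z) = cinner x y - cinner x z.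
Proof. by rewrite cinnerDr -scaleN1r cinnerZr mulN1r. Qed.

Lemma cinnerDl x y z : cinner (y + z) x = cinner y x + cinner z x.
Proof. by rewrite cinnerC cinnerDr rmorphD /= -!cinnerC. Qed.

Lemma cinnerZl x y a : cinner (a *: y) x = a^* * cinner y x.
Proof. by rewrite cinnerC cinnerZr rmorphM /= -cinnerC. Qed.

Lemma cinnerBl x y z : cinner (y - z) x = cinner y x - cinner z x.
Proof. by rewrite cinnerC cinnerBr rmorphB /= -!cinnerC. Qed.

Lemma cinner_adjmx M x y : cinner x (M *m y) = cinner (adjmx M *m x) y.
Proof. by rewrite /cinner adjmxM adjmxK mulmxA. Qed.

Lemma cinner_isometry M x y :
  adjmx M *m M = 1%:M -> cinner (M *m x) (M *m y) = cinner x y.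
Proof. by move=> hM; rewrite cinner_adjmx mulmxA hM mul1mx. Qed.

Lemma cinner_delta j y : cinner (delta_mx j 0) y = y j 0.
Proof.
rewrite cinnerE (bigD1 j) //= mxE !eqxx conjC1 mul1r big1 ?addr0 // => k /negbTE kj.
by rewrite mxE kj conjC0 mul0r.
Qed.

Lemma cinnerii x : cinner x x = \sum_k `|x k 0| ^+ 2.
Proof. by rewrite cinnerE; apply: eq_bigr => k _; rewrite sqr_normc mulrC. Qed.

Lemma cinnerii_ge0 x : 0 <= cinner x x.
Proof. by rewrite cinnerii sumr_ge0 // => k _; rewrite exprn_ge0. Qed.

Lemma cinnerii_eq0 x : cinner x x = 0 -> x = 0.
Proof.
rewrite cinnerii => /eqP; rewrite psumr_eq0 => [/allP x0|k _]; last exact: exprn_ge0.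
apply/matrixP => i j; rewrite (ord1 j) mxE.
by have /x0 := mem_index_enum i; rewrite expf_eq0 normr_eq0 => /eqP.
Qed.

Lemma cinnerii_cnorm x : cinner x x = (cnorm x ^+ 2)%:C.
Proof.
rewrite /cnorm sqr_sqrtr ?sumr_ge0 // => [|k _]; last by rewrite exprn_ge0 ?normc_ge0.
by rewrite cinnerii raddf_sum; apply: eq_bigr => k _; rewrite sqr_normcE.
Qed.

Lemma cnorm_eq1 x : cnorm x = 1 <-> cinner x x = 1.
Proof.
rewrite cinnerii_cnorm; split=> [->|/complexI /eqP]; first by rewrite expr1n.
by rewrite sqrp_eq1 ?sqrtr_ge0 // => /eqP.
Qed.

Lemma cauchy_schwarz x y : `|cinner x y| ^+ 2 <= cinner x x * cinner y y.
Proof.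
have [x0|nx0] := eqVneq (cinner x x) 0.
  by rewrite (cinnerii_eq0 x0) !cinner0l normr0 expr0n mul0r.
have xx_gt0 : 0 < cinner x x by rewrite lt_def nx0 cinnerii_ge0.
set N := cinner x x; set b := cinner x y.
have NJ : N^* = N by rewrite /N -cinnerC.
have := cinnerii_ge0 (N *: y - b *: x).
rewrite cinnerBl !cinnerBr !cinnerZl !cinnerZr [cinner y x]cinnerC -/N -/b NJ.
have -> : N * (N * cinner y y) - N * (b * b^*) - (b^* * (N * b) - b^* * (b * N)) =
          N * (N * cinner y y - `|b| ^+ 2) by rewrite sqr_normc; ring.
by rewrite pmulr_rge0 // subr_ge0.
Qed.

Lemma normc_cinner_le1 x y :
  cinner x x = 1 -> cinner y y = 1 -> normc (cinner x y) <= 1.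
Proof.
move=> hx hy; have := cauchy_schwarz x y.
by rewrite hx hy mulr1 normcE -rmorphXn -[1]/(1%:C) lecR expr_le1 ?normc_ge0.
Qed.

Lemma normc_cinnerM_le x y z :
  cinner x x = 1 -> cinner y y = 1 -> cinner z z = 1 ->
  normc (cinner x y) * normc (cinner y z) <= normc (cinner x z) +
    Num.sqrt (1 - normc (cinner x y) ^+ 2) * Num.sqrt (1 - normc (cinner y z) ^+ 2).
Proof.
move=> hx hy hz.
set a := cinner y x; set b := cinner y z.
have xy : cinner x y = a^* by rewrite /a -cinnerC.
have zy : cinner z y = b^* by rewrite /b -cinnerC.
set w := cinner (x - a *: y) (z - b *: y).
have w_def : w = cinner x z - a^* * b.
  by rewrite /w cinnerBl !cinnerBr !cinnerZl !cinnerZr hy xy -/b; ring.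
have hxa : cinner (x - a *: y) (x - a *: y) = (1 - normc a ^+ 2)%:C.
  rewrite cinnerBl !cinnerBr !cinnerZl !cinnerZr hy hx xy -/a rmorphB /=.
  by rewrite -mul_conjc_normc; ring.
have hzb : cinner (z - b *: y) (z - b *: y) = (1 - normc b ^+ 2)%:C.
  rewrite cinnerBl !cinnerBr !cinnerZl !cinnerZr hy hz zy -/b rmorphB /=.
  by rewrite -mul_conjc_normc; ring.
have sqr_le1 (u : R[i]) : normc u <= 1 -> 0 <= 1 - normc u ^+ 2.
  by move=> u1; rewrite subr_ge0 expr_le1 ?normc_ge0.
have a_ge : 0 <= 1 - normc a ^+ 2 by rewrite sqr_le1 ?normc_cinner_le1.
have b_ge : 0 <= 1 - normc b ^+ 2 by rewrite sqr_le1 ?normc_cinner_le1.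
have w_le : normc w <= Num.sqrt (1 - normc a ^+ 2) * Num.sqrt (1 - normc b ^+ 2).
  rewrite -sqrtrM // -[leLHS]ger0_norm ?normc_ge0 // -sqrtr_sqr ler_sqrt ?mulr_ge0 //.
  have := cauchy_schwarz (x - a *: y) (z - b *: y).
  by rewrite -/w hxa hzb -rmorphM sqr_normcE lecR.
have ab_le : normc a * normc b <= normc (cinner x z) + normc w.
  have -> : normc a * normc b = normc (a^* * b).
    by rewrite ComplexField.Normc.normcM normc_conj.
  rewrite -lecR rmorphD -!normcE.
  have -> : a^* * b = cinner x z - w by rewrite w_def opprB addrC subrK.
  exact: ler_normB.
by rewrite xy normc_conj (le_trans ab_le) // lerD2l.
Qed.

Lemma sine_triangle x y z :
  cinner x x = 1 -> cinner y y = 1 -> cinner z z = 1 ->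
  Num.sqrt (1 - normc (cinner x z) ^+ 2) <=
  Num.sqrt (1 - normc (cinner x y) ^+ 2) + Num.sqrt (1 - normc (cinner y z) ^+ 2).
Proof.
move=> hx hy hz; apply: sqrt1B_sqr_triangle; rewrite ?normc_ge0 ?normc_cinner_le1 //.
exact: normc_cinnerM_le.
Qed.

(* Equality case of Cauchy-Schwarz: the residual [M x - mu x] has norm
   [1 - mu^* mu = 0]. *)
Lemma isometry_eigen M x : adjmx M *m M = 1%:M -> cinner x x = 1 ->
  normc (cinner x (M *m x)) = 1 -> M *m x = cinner x (M *m x) *: x.
Proof.
move=> hM hx mu1; set mu := cinner x (M *m x) in mu1 *.
have hMx : cinner (M *m x) (M *m x) = 1 by rewrite cinner_isometry.
apply/eqP; rewrite -subr_eq0; apply/eqP/cinnerii_eq0.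
rewrite cinnerBl !cinnerBr !cinnerZl !cinnerZr hMx hx [cinner (M *m x) x]cinnerC -/mu.
have : mu^* * mu = 1 by rewrite mul_conjc_normc mu1 expr1n.
by move=> muJmu; rewrite mulr1 subrr subr0 mulrC muJmu subrr.
Qed.

End InnerProduct.

Lemma mx_scalar_of_eigen (R : realType) (m : nat) (M : 'M[R[i]]_m.+1) :
  (forall x, cinner x x = 1 -> exists mu, M *m x = mu *: x) -> M = (M 0 0)%:M.
Proof.
move=> eigen.
have Mdelta j : M *m delta_mx j 0 = M j j *: (delta_mx j 0 : 'cV_m.+1).
  have [|mu Mj] := eigen (delta_mx j 0); first by rewrite cinner_delta mxE !eqxx.
  suff -> : M j j = mu by [].
  by have := congr1 (fun v : 'cV_m.+1 => v j 0) Mj; rewrite -colE !mxE !eqxx mulr1.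
have diagM j k : j != k -> M j j = M k k.
  move=> jk; pose c : R[i] := (Num.sqrt 2^-1)%:C.
  have c_neq0 : c != 0 by rewrite eq_complex /= eqxx andbT sqrtr_eq0 -ltNge invr_gt0 ltr0n.
  have ccJ : c^* * c = 2^-1.
    have -> : c^* = c by exact: conjc_real.
    rewrite -rmorphM -expr2 sqr_sqrtr ?invr_ge0 ?ler0n //.
    by rewrite rmorphV ?unitfE ?pnatr_eq0 // rmorph_nat.
  pose x := c *: (delta_mx j 0 + delta_mx k 0 : 'cV_m.+1).
  have [|mu Mx] := eigen x.
    rewrite cinnerZl cinnerZr !cinnerDl !cinnerDr !cinner_delta !mxE !eqxx.
    rewrite (negbTE jk) eq_sym (negbTE jk) /= mulrA ccJ.
    by rewrite !addr0 !add0r mulVf ?pnatr_eq0.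
  have := congr1 (fun v : 'cV_m.+1 => v j 0) Mx; have := congr1 (fun v : 'cV_m.+1 => v k 0) Mx.
  rewrite -scalemxAr mulmxDr !Mdelta !mxE !eqxx (negbTE jk) eq_sym (negbTE jk) /=.
  rewrite !mulr1 !mulr0 !addr0 !add0r => Mk Mj.
  by apply: (mulfI c_neq0); rewrite Mj Mk.
apply/matrixP => i j.
have -> : M i j = (M *m (delta_mx j 0 : 'cV_m.+1)) i 0 by rewrite -colE mxE.
rewrite Mdelta !mxE.
have -> : M j j = M 0 0 by have [->|/diagM] := eqVneq j 0.
by case: (i == j); rewrite ?eqxx ?mulr1 ?mulr0.
Qed.

Section UDistance.
Variables (R : realType) (n : nat).
Implicit Types (x : 'cV[R[i]]_n) (U V W : 'M[R[i]]_n).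

Definition udist_at U V x : R :=
  Num.sqrt (1 - normc (cinner x ((adjmx U *m V) *m x)) ^+ 2).

Local Open Scope classical_set_scope.

Lemma udistE U V : udist U V = sup [set udist_at U V x | x in [set x | cnorm x = 1]].
Proof. by []. Qed.

Lemma udist_at_ge0 U V x : 0 <= udist_at U V x.
Proof. exact: sqrtr_ge0. Qed.

Lemma udist_at_le1 U V x : udist_at U V x <= 1.
Proof. by rewrite -sqrtr1 ler_sqrt ?ler01 // gerBl sqr_ge0. Qed.

Lemma udist_at_le U V x : cnorm x = 1 -> udist_at U V x <= udist U V.
Proof.
move=> x1; apply: ub_le_sup; last by exists x.
by exists 1 => _ [y _ <-]; exact: udist_at_le1.
Qed.

Lemma udist_le U V r : 0 <= r ->
  (forall x, cnorm x = 1 -> udist_at U V x <= r) -> udist U V <= r.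
Proof.
move=> r0 le_r; rewrite udistE.
have [->|/set0P img_neq0] := eqVneq [set udist_at U V x | x in [set x | cnorm x = 1]] set0.
  by rewrite sup0.
by apply: ge_sup => // _ [x x1 <-]; exact: le_r.
Qed.

Lemma udist_ge0 U V : 0 <= udist U V.
Proof.
rewrite udistE.
have [->|/set0P [_ [x x1 _]]] := eqVneq [set udist_at U V x | x in [set x | cnorm x = 1]] set0.
  by rewrite sup0.
exact: le_trans (udist_at_ge0 U V x) (udist_at_le U V x1).
Qed.

Lemma udist_at_phase U V (c d : R) x :
  udist_at ((expi c)%:M *m U) ((expi d)%:M *m V) x = udist_at U V x.
Proof.
rewrite /udist_at adjmxM adjmx_scalar !mul_scalar_mx mul_mx_scalar -scalemxAl.
rewrite -scalemxAr scalerA -scalemxAl cinnerZr !ComplexField.Normc.normcM.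
by rewrite normc_conj !normc_expi !mul1r.
Qed.

Lemma udist_atC U V x : udist_at V U x = udist_at U V x.
Proof.
rewrite /udist_at; have -> : adjmx V *m U = adjmx (adjmx U *m V) by rewrite adjmxM adjmxK.
by rewrite cinner_adjmx adjmxK cinnerC normc_conj.
Qed.

Lemma adjmx_mul_isometry U V : unitary U -> unitary V ->
  adjmx (adjmx U *m V) *m (adjmx U *m V) = 1%:M.
Proof.
by move=> [_ UU'] [V'V _]; rewrite adjmxM adjmxK -mulmxA (mulmxA U) UU' mul1mx V'V.
Qed.

Lemma udist_at_triangle U V W x : unitary U -> unitary V -> unitary W ->
  cnorm x = 1 -> udist_at U W x <= udist_at V W x + udist_at U V ((adjmx V *m W) *m x).
Proof.
move=> hU hV hW /cnorm_eq1 x1.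
set y := (adjmx V *m W) *m x.
have y1 : cinner y y = 1 by rewrite cinner_isometry ?adjmx_mul_isometry.
have UWx : (adjmx U *m W) *m x = (adjmx U *m V) *m y.
  by case: hV => _ VV'; rewrite /y !mulmxA -(mulmxA _ V) VV' mulmx1.
have UWx1 : cinner ((adjmx U *m W) *m x) ((adjmx U *m W) *m x) = 1.
  by rewrite cinner_isometry ?adjmx_mul_isometry.
by have := sine_triangle x1 y1 UWx1; rewrite {2}UWx.
Qed.

Lemma udist_at_refl U x : unitary U -> cnorm x = 1 -> udist_at U U x = 0.
Proof.
move=> [U'U _] /cnorm_eq1 x1.
by rewrite /udist_at U'U mul1mx x1 ComplexField.Normc.normc1 expr1n subrr sqrtr0.
Qed.

Lemma udist_phase U V (c d : R) :
  udist ((expi c)%:M *m U) ((expi d)%:M *m V) = udist U V.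
Proof.
by rewrite !udistE; congr (sup (image _ _)); apply: funext => x; rewrite udist_at_phase.
Qed.

Lemma udistC U V : udist U V = udist V U.
Proof. by rewrite !udistE; congr (sup (image _ _)); apply: funext => x; rewrite udist_atC. Qed.

Lemma udist_triangle U V W : unitary U -> unitary V -> unitary W ->
  udist U W <= udist U V + udist V W.
Proof.
move=> hU hV hW; apply: udist_le => [|x x1]; first by rewrite addr_ge0 ?udist_ge0.
rewrite addrC (le_trans (udist_at_triangle hU hV hW x1)) // lerD ?udist_at_le //.
by apply/cnorm_eq1; rewrite cinner_isometry ?adjmx_mul_isometry // -cnorm_eq1.
Qed.

End UDistance.

Lemma udist_eq0 (R : realType) (n : nat) (U V : 'M[R[i]]_n) : unitary U -> unitary V ->
  udist U V = 0 <-> exists c : R, V = (expi c)%:M *m U.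
Proof.
move=> hU hV; split=> [D0|[c ->]]; last first.
  apply/le_anti; rewrite udist_ge0 andbT; apply: udist_le => // x x1.
  have phase0 : (expi 0)%:M *m U = U by rewrite /expi cos0 sin0 mul1mx.
  by rewrite -{1}phase0 udist_at_phase udist_at_refl.
case: n U V hU hV D0 => [|m] U V hU hV D0.
  by exists 0; apply/matrixP => -[].
set M := adjmx U *m V.
have hM : adjmx M *m M = 1%:M by apply: adjmx_mul_isometry.
have fid1 x : cinner x x = 1 -> normc (cinner x (M *m x)) = 1.
  move=> x1; have Mx1 : cinner (M *m x) (M *m x) = 1 by rewrite cinner_isometry.
  have : udist_at U V x <= 0 by rewrite -D0 udist_at_le // cnorm_eq1.
  rewrite /udist_at -/M -sqrtr0 ler_sqrt // subr_le0.
  move: (normc_cinner_le1 x1 Mx1) (normc_ge0 (cinner x (M *m x))).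
  by rewrite !expr2; nra.
have eigen x : cinner x x = 1 -> exists mu, M *m x = mu *: x.
  by move=> x1; exists (cinner x (M *m x)); apply: isometry_eigen => //; apply: fid1.
have [c M00] : exists c, M 0 0 = expi c.
  apply: normc_eq1_expi; have e0_1 : cinner (delta_mx 0 0 : 'cV[R[i]]_m.+1) (delta_mx 0 0) = 1.
    by rewrite cinner_delta mxE.
  by have := fid1 _ e0_1; rewrite cinner_delta -colE mxE.
exists c; rewrite -M00 mul_scalar_mx -mul_mx_scalar -(mx_scalar_of_eigen eigen).
by rewrite /M mulmxA; case: hU => _ ->; rewrite mul1mx.
Qed.

Theorem mainTheorem4 (R : realType) (n : nat) :
  (forall (U V : 'M[R[i]]_n) (c d : R), unitary U -> unitary V ->
     udist ((expi c)%:M *m U) ((expi d)%:M *m V) = udist U V) /\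
  (forall U V : 'M[R[i]]_n, unitary U -> unitary V -> 0 <= udist U V) /\
  (forall U V : 'M[R[i]]_n, unitary U -> unitary V ->
     (udist U V = 0 <-> exists c : R, V = (expi c)%:M *m U)) /\
  (forall U V : 'M[R[i]]_n, unitary U -> unitary V -> udist U V = udist V U) /\
  (forall U V W : 'M[R[i]]_n, unitary U -> unitary V -> unitary W ->
     udist U W <= udist U V + udist V W).
Proof.
split; first by move=> U V c d _ _; exact: udist_phase.
split; first by move=> U V _ _; exact: udist_ge0.
split; first exact: udist_eq0.
split; first by move=> U V _ _; exact: udistC.
exact: udist_triangle.
Qed.
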